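(* Let $n\ge 2$ and let $\mathbf d_n=(d_1,d_2,\ldots,d_n)$ be a nonincreasing sequence of nonnegative integers. Then $\mathbf d_n$ is the degree sequence of some Toeplitz graph on $n$ vertices if and only if there is a permutation $\pi$ of $[n]$ such that, writing $m=\lfloor (n-1)/2\rfloor$ and letting $s$ be the number of indices $i\in\{1,\ldots,m\}$ with $d_{\pi(i+1)}\ne d_{\pi(i)}$: (a) $|d_{\pi(i+1)}-d_{\pi(i)}|\le 1$ for every $i\in[n-1]$; (b) $d_{\pi(i)}=d_{\pi(n-i+1)}$ for every $i\in[n]$; (c) $s\le d_{\pi(1)}\le n-1-s$; (d) if $n$ is odd, then $d_{\pi(1)}$ and $s$ have the same parity.
   Context: A Toeplitz graph on $n$ vertices is a simple graph whose adjacency matrix is a symmetric $(0,1)$ Toeplitz matrix with zero diagonal; equivalently, for some $k\ge 0$ and integers $1\le t_1<\cdots<t_k\le n-1$, it is the graph $G_n\langle t_1,\ldots,t_k\rangle$ on vertex set $[n]$ in which distinct $i,j$ are adjacent iff $|i-j|\in\{t_1,\ldots,t_k\}$ (with $k=0$ giving the edgeless graph). The degree sequence of a graph is the nonincreasing sequence of its vertex degrees. *)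

From mathcomp Require Import all_boot all_order.

Set Implicit Arguments. Unset Strict Implicit. Unset Printing Implicit Defensive.

(* Vertices of an n-vertex graph are 0, ..., n-1 (i.e. 'I_n); the paper's
   vertex i in [n] corresponds to i-1 here. *)

Definition ndist (i j : nat) : nat := (i - j) + (j - i).

(* The Toeplitz graph G_n<t_1,...,t_k>: the set T of differences
   ({t_1,...,t_k}, a subset of {1,...,n-1}) is given as a sequence. *)
Definition toeplitz_adj (n : nat) (T : seq nat) : rel 'I_n :=
  fun i j => (i != j) && (ndist i j \in T).

Definition is_toeplitz_set (n : nat) (T : seq nat) : bool :=
  uniq T && all (fun t => (1 <= t <= n.-1)) T.

Definition degree (n : nat) (e : rel 'I_n) (v : 'I_n) : nat :=
  #|[set w | e v w]|.

Definition degree_sequence (n : nat) (e : rel 'I_n) : seq nat :=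
  sort geq [seq degree e v | v <- enum 'I_n].

Definition toeplitz_graphic (n : nat) (d : seq nat) : Prop :=
  exists T : seq nat, is_toeplitz_set n T /\ degree_sequence (@toeplitz_adj n T) = d.

(* Conditions (a)-(d) for a permutation p of {0,...,n-1} (listed as a sequence,
   p`_k = pi(k+1) - 1).  dp k = d_{pi(k+1)} (0-indexed positions). *)
Definition perm_conditions (n : nat) (d : seq nat) (p : seq nat) : Prop :=
  let dp k := nth 0 d (nth 0 p k) in
  let m := n.-1./2 in
  let s := count (fun k => dp k.+1 != dp k) (iota 0 m) in
  [/\ forall k, k.+1 < n -> ndist (dp k.+1) (dp k) <= 1,
      forall k, k < n -> dp k = dp (n.-1 - k),
      s <= dp 0 <= n.-1 - s
    & odd n -> odd (dp 0) = odd s].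

(* In G_n<T> the neighbours of vertex k are the k - t and k + t with t in T,
   so its degree is F(k) + F(n-1-k), where F(i) counts the t in T with t <= i.
   This profile D is symmetric, and D(k+1) - D(k) = [k+1 in T] - [n-1-k in T]
   is -1, 0 or 1.  On the first half (k < m) the profile changes exactly at the
   s steps where one of k+1, n-1-k lies in T; if both lie in T at c steps and
   e <= 1 records the middle difference m+1 (which exists only for even n),
   then D(0) = F(n-1) = s + 2c + e with s + c <= m, which gives (c) and (d).
   Conversely a profile satisfying (a)-(d) is realised by putting k+1 into T
   on rising steps, n-1-k on falling steps, both on (D(0) - s)/2 flat steps,
   and the middle difference according to the parity of D(0) - s.  The
   permutation pi only lists the degrees in vertex order. *)

From mathcomp Require Import all_boot all_order zify.

Set Implicit Arguments.
Unset Strict Implicit.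
Unset Printing Implicit Defensive.

Lemma card_ord_count n (P : pred nat) :
  #|[set i : 'I_n | P i]| = count P (iota 0 n).
Proof. by rewrite cardsE cardE -val_enum_ord count_map size_filter enumT. Qed.

Lemma map_subn_iota a r : r <= a ->
  [seq a - k | k <- iota 0 r] = rev (iota (a - r).+1 r).
Proof.
elim: r => [|r IHr] lt_ra //.
rewrite -addn1 iotaD map_cat IHr ?addn1 1?ltnW // add0n cats1 -rev_cons.
by have -> : (a - r.+1).+1 = a - r by lia.
Qed.

Lemma count_xor_and (T : Type) (P Q : pred T) (s : seq T) :
  count P s + count Q s =
  count (fun x => P x != Q x) s + 2 * count (fun x => P x && Q x) s.
Proof. by elim: s => //= x s IHs; case: (P x); case: (Q x) => /=; lia. Qed.

Lemma count_xor_and_le (T : Type) (P Q : pred T) (s : seq T) :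
  count (fun x => P x != Q x) s + count (fun x => P x && Q x) s <= size s.
Proof. by elim: s => //= x s IHs; case: (P x); case: (Q x) => /=; lia. Qed.

Lemma count_capped (P : pred nat) c r :
  count (fun k => P k && (count P (iota 0 k) < c)) (iota 0 r) =
  minn c (count P (iota 0 r)).
Proof.
elim: r => [|r IHr]; first by rewrite minn0.
rewrite -addn1 iotaD !count_cat IHr /= !addn0 add0n.
by case: (P r); case: ltnP => /=; lia.
Qed.

Definition lower_degree (T : seq nat) (i : nat) : nat := count (mem T) (iota 1 i).

Definition toeplitz_deg (n : nat) (T : seq nat) (k : nat) : nat :=
  lower_degree T k + lower_degree T (n.-1 - k).

Lemma lower_degreeS T i : lower_degree T i.+1 = lower_degree T i + (i.+1 \in T).
Proof. by rewrite /lower_degree -[i.+1]addn1 iotaD count_cat /= addn0 add1n addn1. Qed.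

Lemma lower_degreeE T i : lower_degree T i = count (fun k => k.+1 \in T) (iota 0 i).
Proof. by rewrite /lower_degree (iotaDl 1 0) count_map. Qed.

Lemma lower_degree_split T a r : r <= a ->
  lower_degree T a = lower_degree T (a - r) + count (fun k => (a - k) \in T) (iota 0 r).
Proof.
move=> le_ra; rewrite /lower_degree.
rewrite -[in LHS](subnK le_ra) iotaD count_cat add1n.
by rewrite -(count_map (subn a)) map_subn_iota // count_rev.
Qed.

Lemma count_toeplitz_nbrs n T i : i < n ->
  count (fun j => (i != j) && (ndist i j \in T)) (iota 0 n) = toeplitz_deg n T i.
Proof.
move=> lt_in; rewrite [X in iota 0 X](_ : n = i + (n.-1 - i).+1); last by lia.
rewrite iotaD count_cat /= eqxx add0n /toeplitz_deg; congr (_ + _).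
  have revE := @map_subn_iota i i (leqnn i); rewrite subnn in revE.
  rewrite /lower_degree -(count_rev _ (iota 1 i)) -revE count_map.
  apply: eq_in_count => j; rewrite mem_iota add0n => /andP[_ lt_ji] /=.
  have -> : i != j by lia.
  by rewrite /ndist; congr (_ \in T); lia.
rewrite add0n -[i.+1]addn1 iotaDl count_map /lower_degree.
apply: eq_in_count => j; rewrite mem_iota => /andP[gt_j0 _] /=.
have -> : i != i + j by lia.
by rewrite /ndist; congr (_ \in T); lia.
Qed.

Lemma degree_toeplitz_adj n T (v : 'I_n) :
  degree (@toeplitz_adj n T) v = toeplitz_deg n T v.
Proof.
rewrite /degree -(count_toeplitz_nbrs T (ltn_ord v)) -card_ord_count.
by apply: eq_card => w; rewrite !inE.
Qed.

(* [perm_conditions n d p] unfolds to [degree_conditions n (fun k => nth 0 d (nth 0 p k))]. *)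
Definition degree_conditions (n : nat) (D : nat -> nat) : Prop :=
  let m := n.-1./2 in
  let s := count (fun k => D k.+1 != D k) (iota 0 m) in
  [/\ forall k, k.+1 < n -> ndist (D k.+1) (D k) <= 1,
      forall k, k < n -> D k = D (n.-1 - k),
      s <= D 0 <= n.-1 - s
    & odd n -> odd (D 0) = odd s].

Section ToeplitzDegree.

Variables (n : nat) (T : seq nat).
Hypothesis n_gt0 : 0 < n.

Local Notation deg := (toeplitz_deg n T).
Local Notation m := n.-1./2.

Lemma toeplitz_deg_sym k : k < n -> deg (n.-1 - k) = deg k.
Proof. by move=> lt_kn; rewrite /toeplitz_deg addnC subKn // -ltnS prednK. Qed.

Lemma toeplitz_deg_step k : k.+1 < n ->
  deg k.+1 + ((n.-1 - k) \in T) = deg k + (k.+1 \in T).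
Proof.
move=> lt_kn; rewrite /toeplitz_deg lower_degreeS.
have -> : n.-1 - k = (n.-1 - k.+1).+1 by lia.
by rewrite lower_degreeS; lia.
Qed.

Lemma toeplitz_deg0 :
  deg 0 = count (fun k => (k.+1 \in T) != ((n.-1 - k) \in T)) (iota 0 m)
          + 2 * count (fun k => (k.+1 \in T) && ((n.-1 - k) \in T)) (iota 0 m)
          + (~~ odd n && (m.+1 \in T)).
Proof.
rewrite /toeplitz_deg [lower_degree T 0]/lower_degree add0n subn0.
rewrite (@lower_degree_split T n.-1 m); last by lia.
have -> : n.-1 - m = m + ~~ odd n by have := n_gt0; lia.
rewrite -count_xor_and -lower_degreeE.
by case: (odd n); rewrite /= ?addn0 ?addn1 ?lower_degreeS // addnAC.
Qed.

Lemma toeplitz_deg_conditions : degree_conditions n deg.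
Proof.
have steps : count (fun k => deg k.+1 != deg k) (iota 0 m) =
             count (fun k => (k.+1 \in T) != ((n.-1 - k) \in T)) (iota 0 m).
  apply: eq_in_count => k; rewrite mem_iota => /andP[_ lt_km].
  have := @toeplitz_deg_step k ltac:(lia).
  by case: (_ \in T); case: (_ \in T) => /=; lia.
rewrite /degree_conditions /= steps toeplitz_deg0.
have := count_xor_and_le (fun k => k.+1 \in T) (fun k => (n.-1 - k) \in T) (iota 0 m).
rewrite size_iota.
set s := count (fun k => _ != _) _; set c := count (fun k => _ && _) _ => le_sc_m.
split.
- move=> k lt_kn; have := toeplitz_deg_step lt_kn; rewrite /ndist.
  by case: (_ \in T); case: (_ \in T) => /=; lia.
- by move=> k lt_kn; rewrite toeplitz_deg_sym.
- by apply/andP; case: (boolP (odd n)) => odd_n; case: (m.+1 \in T) => /=; lia.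
- by move=> ->; lia.
Qed.

Lemma toeplitz_deg_eq (D : nat -> nat) :
    (forall k, k < n -> D k = D (n.-1 - k)) -> deg 0 = D 0 ->
    (forall k, k < m -> D k.+1 + ((n.-1 - k) \in T) = D k + (k.+1 \in T)) ->
  forall k, k < n -> deg k = D k.
Proof.
move=> symD deg0 stepD.
have first_half k : k <= m -> deg k = D k.
  elim: k => [//|k IHk] lt_km.
  have := @toeplitz_deg_step k ltac:(lia).
  by have := stepD k lt_km; have := IHk (ltnW lt_km); lia.
move=> k lt_kn; case: (leqP k m) => [/first_half //|lt_mk].
by rewrite -toeplitz_deg_sym // symD // first_half //; lia.
Qed.

End ToeplitzDegree.

Section Realization.

Variables (n : nat) (D : nat -> nat).

Local Notation m := n.-1./2.
Local Notation s := (count (fun k => D k.+1 != D k) (iota 0 m)).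

Hypothesis n_gt0 : 0 < n.
Hypothesis D_lipschitz : forall k, k.+1 < n -> ndist (D k.+1) (D k) <= 1.
Hypothesis D_sym : forall k, k < n -> D k = D (n.-1 - k).
Hypothesis D0_bounds : s <= D 0 <= n.-1 - s.
Hypothesis D0_parity : odd n -> odd (D 0) = odd s.

Let flat k := D k.+1 == D k.
Let both k := flat k && (count flat (iota 0 k) < (D 0 - s)./2).
Let rise k := (D k < D k.+1) || both k.
Let fall k := (D k.+1 < D k) || both k.
Let mid := odd (D 0 - s).

Definition realizing_set : seq nat :=
  [seq j <- iota 1 n.-1 | if j <= m then rise j.-1
                          else if n.-1 - j < m then fall (n.-1 - j) else mid].

Lemma realizing_mid_odd : odd n -> mid = false.
Proof. by move=> /[dup] odd_n /D0_parity; move: D0_bounds; rewrite /mid; lia. Qed.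

Lemma realizing_count_both : count both (iota 0 m) = (D 0 - s)./2.
Proof.
have flat_s : count flat (iota 0 m) + s = m.
  by rewrite -[RHS](size_iota 0 m) -(count_predC flat).
rewrite /both count_capped; apply/minn_idPl; move: D0_bounds.
by case: (boolP (odd n)) => [/realizing_mid_odd|_]; rewrite /mid; lia.
Qed.

Lemma both_flat k : both k -> D k.+1 = D k.
Proof. by case/andP => /eqP. Qed.

Lemma rise_fall_xor k : (rise k != fall k) = (D k.+1 != D k).
Proof.
rewrite /rise /fall; case: ltngtP => [lt_D|gt_D|_]; rewrite /= ?eqxx //.
all: by case: (boolP (both k)) => // /both_flat; lia.
Qed.

Lemma rise_fall_and k : rise k && fall k = both k.
Proof.
rewrite /rise /fall; case: ltngtP => [lt_D|gt_D|_]; rewrite /= ?andbb //.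
all: by case: (boolP (both k)) => // /both_flat; lia.
Qed.

Lemma rise_fall_step k : k.+1 < n -> D k.+1 + fall k = D k + rise k.
Proof.
move/D_lipschitz; rewrite /rise /fall /ndist.
by case: ltngtP => [lt_D|gt_D|eq_D]; case: (boolP (both k)) => [/both_flat|_] /=; lia.
Qed.

Lemma mem_realizing_set j : (j \in realizing_set) =
  (0 < j < n) && (if j <= m then rise j.-1 else if n.-1 - j < m then fall (n.-1 - j) else mid).
Proof. by rewrite mem_filter mem_iota andbC; congr (_ && _); lia. Qed.

Lemma realizing_set_toeplitz : is_toeplitz_set n realizing_set.
Proof.
rewrite /is_toeplitz_set filter_uniq ?iota_uniq //=.
by apply/allP => j; rewrite mem_realizing_set => /andP[/andP[gt_j0 lt_jn] _]; lia.
Qed.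

Lemma realizing_set_rise k : k < m -> (k.+1 \in realizing_set) = rise k.
Proof. by move=> lt_km; rewrite mem_realizing_set ifT //= andb_idl //; lia. Qed.

Lemma realizing_set_fall k : k < m -> (n.-1 - k \in realizing_set) = fall k.
Proof.
by move=> lt_km; rewrite mem_realizing_set ifN ?subKn ?ifT ?andb_idl //; lia.
Qed.

Lemma realizing_set_mid : ~~ odd n && (m.+1 \in realizing_set) = mid.
Proof.
case: (boolP (odd n)) => [/realizing_mid_odd -> // | even_n].
by rewrite mem_realizing_set ifN ?ifN /= ?andb_idl //; lia.
Qed.

Lemma realizing_set_deg k : k < n -> toeplitz_deg n realizing_set k = D k.
Proof.
apply: toeplitz_deg_eq => // [|j lt_jm]; last first.
  by rewrite realizing_set_rise // realizing_set_fall // rise_fall_step //; lia.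
rewrite toeplitz_deg0 // realizing_set_mid.
have -> : count (fun j => (j.+1 \in realizing_set) != (n.-1 - j \in realizing_set)) (iota 0 m) = s.
  apply: eq_in_count => j; rewrite mem_iota => /andP[_ lt_jm].
  by rewrite realizing_set_rise // realizing_set_fall // rise_fall_xor.
have -> : count (fun j => (j.+1 \in realizing_set) && (n.-1 - j \in realizing_set)) (iota 0 m) =
          count both (iota 0 m).
  apply: eq_in_count => j; rewrite mem_iota => /andP[_ lt_jm].
  by rewrite realizing_set_rise // realizing_set_fall // rise_fall_and.
by rewrite realizing_count_both; move: D0_bounds; rewrite /mid; lia.
Qed.

End Realization.

Lemma degree_conditions_realizable n D : 0 < n -> degree_conditions n D ->
  exists2 T, is_toeplitz_set n T & forall k, k < n -> toeplitz_deg n T k = D k.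
Proof.
move=> n_gt0 [D_lipschitz D_sym D0_bounds D0_parity]; exists (realizing_set n D).
  exact: realizing_set_toeplitz.
exact: realizing_set_deg.
Qed.

Lemma degree_conditions_ext n D1 D2 : 0 < n ->
  (forall k, k < n -> D1 k = D2 k) -> degree_conditions n D1 -> degree_conditions n D2.
Proof.
move=> n_gt0 eqD [D_lipschitz D_sym D0_bounds D0_parity]; rewrite /degree_conditions /=.
have -> : count (fun k => D2 k.+1 != D2 k) (iota 0 n.-1./2) =
          count (fun k => D1 k.+1 != D1 k) (iota 0 n.-1./2).
  by apply: eq_in_count => k; rewrite mem_iota => /andP[_ lt_km]; rewrite -(eqD k) -?(eqD k.+1) //; lia.
rewrite -(eqD 0 n_gt0); split=> // k lt_kn.
  have lt_k : k < n by lia.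
  by rewrite -(eqD _ lt_kn) -(eqD _ lt_k); apply: D_lipschitz.
have lt_k : n.-1 - k < n by lia.
by rewrite -(eqD _ lt_kn) -(eqD _ lt_k); apply: D_sym.
Qed.

Lemma degree_sequence_toeplitz n T :
  degree_sequence (@toeplitz_adj n T) = sort geq (mkseq (toeplitz_deg n T) n).
Proof.
rewrite /degree_sequence /mkseq -val_enum_ord -map_comp.
by congr sort; apply: eq_map => v; apply: degree_toeplitz_adj.
Qed.

Theorem theorem4p4 (n : nat) (d : seq nat) :
  2 <= n -> size d = n -> sorted geq d ->
  toeplitz_graphic n d <->
  exists p : seq nat, perm_eq p (iota 0 n) /\ perm_conditions n d p.
Proof.
move=> ge2_n size_d sorted_d; have n_gt0 : 0 < n by lia.
have geq_total : total geq by move=> a b; apply: leq_total.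
have geq_trans : transitive geq := rev_trans leq_trans.
have geq_anti : antisymmetric geq by move=> a b /andP[]; lia.
split=> [[T [_ degT]] | [p [perm_p conds_p]]].
- have /(perm_iotaP 0)[p perm_p degE] : perm_eq (mkseq (toeplitz_deg n T) n) d.
    by rewrite -degT degree_sequence_toeplitz perm_sym perm_sort.
  exists p; split; first by rewrite -size_d.
  apply: degree_conditions_ext (toeplitz_deg_conditions T n_gt0) => // k lt_kn.
  by rewrite -(nth_mkseq 0 _ lt_kn) degE (nth_map 0) // (perm_size perm_p) size_iota size_d.
- have [T T_toeplitz degT] := degree_conditions_realizable n_gt0 conds_p.
  exists T; split=> //.
  rewrite degree_sequence_toeplitz -[RHS](sorted_sort geq_trans sorted_d).
  apply/(perm_sortP geq_total geq_trans geq_anti)/(perm_iotaP 0).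
  exists p; first by rewrite size_d.
  have size_p : size p = n by rewrite (perm_size perm_p) size_iota.
  apply: (@eq_from_nth _ 0) => [|k]; rewrite size_mkseq ?size_map ?size_p // => lt_kn.
  by rewrite nth_mkseq // degT // (nth_map 0) ?size_p.
Qed.
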